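(* Let $\Gamma=\mathbb F_r$ and let $\varepsilon_c=\varepsilon_c(r)$ be the constant defined below. If $\varepsilon<\varepsilon_c$, then for all sufficiently small $\delta>0$, \[\liminf_{n\to\infty}\frac1n\log\mathbb P\Big(\frac{\mathsf{mcut}(\sigma_n)}{rn}<\varepsilon+\delta\Big)<0,\] where $\sigma_n\in\mathrm{Hom}(\mathbb F_r,\mathrm{Sym}([n]))$ is uniformly random.
   Context: $\Gamma=\mathbb F_r$ is the free group on $s_1,\dots,s_r$. For a finite set $V$ and $\sigma\in\mathrm{Hom}(\mathbb F_r,\mathrm{Sym}(V))$, the graph of $\sigma$ is the multigraph with one edge $\{v,\sigma(s_i)v\}$ for each $v\in V$, $i\in[r]$ (so $|V|r$ edges). A bisection of $V$ is a partition $V=V_1\sqcup V_2$ with $||V_1|-|V_2||\le1$; its cut size is the number of edges with endpoints in different parts; $\mathsf{mcut}(\sigma)$ is the minimum cut size over bisections of the graph of $\sigma$. $\sigma_n\in\mathrm{Hom}(\mathbb F_r,\mathrm{Sym}([n]))$ is uniformly random, i.e. $\sigma_n(s_1),\dots,\sigma_n(s_r)$ are independent uniform permutations of $[n]$. The constant $\varepsilon_c=\varepsilon_c(r)$ is the limit in probability of $\mathsf{mcut}(\sigma_n)/(rn)$ as $n\to\infty$ (its existence, with $\varepsilon_c=\frac12-\mathsf P_*\frac1{\sqrt{2r}}+o_r(r^{-1/2})$, $\mathsf P_*\approx0.7632$, is due to Dembo–Montanari–Sen, and may be assumed). *)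

From HB Require Import structures.
From mathcomp Require Import all_boot all_order all_algebra.
From mathcomp Require Import perm.
From mathcomp Require Import all_classical all_reals all_analysis.
Set Implicit Arguments. Unset Strict Implicit. Unset Printing Implicit Defensive.
Import Order.TTheory GRing.Theory Num.Theory.
Import numFieldNormedType.Exports.
Local Open Scope ring_scope.

(* A homomorphism F_r -> Sym([n]) is the same as an r-tuple of permutations
   (images of the free generators s_1..s_r). *)
Definition hom_Fr (r n : nat) := {ffun 'I_r -> {perm 'I_n}}.

Definition is_bisection (n : nat) (A : {set 'I_n}) : bool :=
  (#|A| <= #|~: A| + 1)%N && (#|~: A| <= #|A| + 1)%N.

(* The graph of sigma has one edge {v, sigma(s_i) v} per pair (v,i);
   cut size = number of such edges with endpoints in different parts. *)
Definition cut_size (r n : nat) (s : hom_Fr r n) (A : {set 'I_n}) : nat :=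
  #|[set p : 'I_n * 'I_r | (p.1 \in A) != (s p.2 p.1 \in A)]|.

(* Minimum cut size over bisections (bisections always exist; r*n is an
   upper bound on every cut size, used only as the neutral element). *)
Definition mcut (r n : nat) (s : hom_Fr r n) : nat :=
  \big[minn/(r * n)%N]_(A : {set 'I_n} | is_bisection A) cut_size s A.

Definition prob (R : realType) (r n : nat) (E : pred (hom_Fr r n)) : R :=
  (#|E|%:R) / (#|{: hom_Fr r n}|%:R).

Definition mcut_ratio (R : realType) (r n : nat) (s : hom_Fr r n) : R :=
  (mcut s)%:R / (r * n)%:R.

Definition log_rate (R : realType) (n : nat) (p : R) : \bar R :=
  if p == 0 then -oo%E else ((ln p) / n%:R)%:E.

Arguments prob {R r n} E.
Arguments mcut_ratio {R r n} s.
Arguments log_rate {R} n p.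

From mathcomp Require Import all_boot all_order all_algebra.
From mathcomp Require Import perm.
From mathcomp Require Import all_classical all_reals all_analysis.
From mathcomp Require Import zify ring lra.
Import Order.TTheory GRing.Theory Num.Theory.
Import numFieldNormedType.Exports.
Set Implicit Arguments. Unset Strict Implicit. Unset Printing Implicit Defensive.

(* The lower tail of mcut is exponentially small by a bounded-differences
   (McDiarmid) argument.  Expose a uniform r-tuple of permutations through a
   Fisher-Yates shuffle of rn steps, each composing one coordinate with a
   uniformly chosen transposition.  Changing the transposition at one step
   changes the resulting homomorphism in at most 3 of its rn edges, and mcut
   is 1-Lipschitz for this Hamming distance on edges, so by Azuma-Hoeffding
   P(mcut <= E mcut - s) <= exp(-s^2 / (72 rn)).  Convergence in probability
   to eps_c forces E mcut >= (eps_c - 2 gam) rn for large n, hence the event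
   mcut / (rn) < eps + delta, which lies gam rn below the mean, has
   probability at most exp(-c n). *)

Section FisherYates.
Variables r n : nat.
Local Notation hom := (hom_Fr r.+1 n.+1).

Definition perm_below (b : nat) : {set {perm 'I_n.+1}} :=
  [set s : {perm 'I_n.+1} | [forall x : 'I_n.+1, (b <= x)%N ==> (s x == x)]].

(* A Fisher-Yates shuffle of the r.+1 coordinates, one after the other, in
   r.+1 * n.+1 steps: [stage m] is the set of outcomes after m steps, in which
   coordinate i has moved only its first [stage_bound i m] points, and step m
   composes coordinate m %/ n.+1 with the transposition (k j), k := m %% n.+1,
   for a uniform j <= k ([sum_stageS]). *)
Definition stage_bound (i m : nat) := minn n.+1 (m - i * n.+1).

Definition stage m : {set hom} :=
  [set f : hom | [forall i : 'I_r.+1, f i \in perm_below (stage_bound i m)]].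

Definition shuffle_step (m j : nat) (f : hom) : hom :=
  [ffun i => if i == inord (m %/ n.+1) then (f i * tperm (inord (m %% n.+1)) (inord j))%g
             else f i].

Definition hom1 : hom := [ffun _ => 1%g].

Lemma shuffle_stepK m j : involutive (shuffle_step m j).
Proof.
move=> f; apply/ffunP => i; rewrite !ffunE; case: eqP => // ->.
by apply/permP => v; rewrite !permM tpermK.
Qed.

Lemma perm_belowP b (s : {perm 'I_n.+1}) :
  reflect (forall x : 'I_n.+1, (b <= x)%N -> s x = x) (s \in perm_below b).
Proof.
rewrite inE; apply: (iffP forallP) => H x.
  by move=> bx; move: (H x); rewrite bx => /eqP.
by apply/implyP => /H ->.
Qed.

Lemma perm_belowS_le k (s : {perm 'I_n.+1}) :
  (k < n.+1)%N -> s \in perm_below k.+1 -> (s (inord k) <= k)%N.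
Proof.
move=> hk /perm_belowP H; rewrite leqNgt; apply/negP => hlt.
have /perm_inj E := H (s (inord k)) hlt.
by move: hlt; rewrite E inordK // ltnn.
Qed.

Lemma perm_below_tperm k j (s : {perm 'I_n.+1}) : (k < n.+1)%N -> (j <= k)%N ->
  ((s * tperm (inord k) (inord j))%g \in perm_below k.+1) &&
  ((s * tperm (inord k) (inord j))%g (inord k) == inord j) = (s \in perm_below k).
Proof.
move=> hk hj; set t := tperm _ _.
have jn : (j < n.+1)%N by apply: leq_ltn_trans hk.
apply/andP/perm_belowP.
  case=> /perm_belowP A /eqP B x kx.
  have -> : s x = t ((s * t)%g x) by rewrite permM tpermK.
  case: (ltngtP k x) kx => // [kx _|kx _].
    rewrite A // tpermD //; apply/negP => /eqP E.
      by move: kx; rewrite -E inordK // ltnn.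
    by move: kx; rewrite -E inordK // ltnNge hj.
  have -> : x = inord k by apply/val_inj; rewrite /= inordK.
  by rewrite B tpermR.
move=> A; split.
  apply/perm_belowP => x kx; rewrite permM A ?(ltnW kx) // tpermD //.
    by apply/negP => /eqP E; move: kx; rewrite -E inordK // ltnn.
  by apply/negP => /eqP E; move: kx; rewrite -E inordK // ltnNge (leq_trans hj).
by rewrite permM A ?inordK // tpermL.
Qed.

Lemma stageP m (f : hom) :
  reflect (forall i : 'I_r.+1, f i \in perm_below (stage_bound i m)) (f \in stage m).
Proof. by rewrite inE; apply: forallP. Qed.

Lemma stage_boundS m (i : 'I_r.+1) : (m < r.+1 * n.+1)%N ->
  if i == inord (m %/ n.+1) :> 'I_r.+1 then
    stage_bound i m = m %% n.+1 /\ stage_bound i m.+1 = (m %% n.+1).+1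
  else stage_bound i m = stage_bound i m.+1.
Proof.
move=> hm; have hq : (m %/ n.+1 < r.+1)%N by rewrite ltn_divLR.
have E : m = (m %/ n.+1 * n.+1 + m %% n.+1)%N by rewrite -divn_eq.
have hr : (m %% n.+1 < n.+1)%N by rewrite ltn_mod.
rewrite /stage_bound; case: eqP => [->|ne].
  by rewrite inordK //; split; lia.
have {}ne : (i : nat) <> m %/ n.+1 by move=> e; apply: ne; apply/val_inj; rewrite /= inordK.
case: (ltngtP i (m %/ n.+1)) => [lt|gt|//].
  have : (i.+1 * n.+1 <= m %/ n.+1 * n.+1)%N by rewrite leq_mul2r lt orbT.
  rewrite mulSn; lia.
have : ((m %/ n.+1).+1 * n.+1 <= i * n.+1)%N by rewrite leq_mul2r gt orbT.
rewrite mulSn; lia.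
Qed.

Lemma inord_eq_inordE k (x : 'I_n.+1) (j : 'I_k.+1) : (x <= k)%N -> (k < n.+1)%N ->
  (inord x == j :> 'I_k.+1) = (x == inord j).
Proof.
move=> xk kn; have jn : (j < n.+1)%N by apply: leq_ltn_trans kn; rewrite -ltnS.
by apply/eqP/eqP => [<-|->]; apply/val_inj; rewrite /= !inordK.
Qed.

Lemma shuffle_step_stage m (j : 'I_(m %% n.+1).+1) (f : hom) : (m < r.+1 * n.+1)%N ->
  (shuffle_step m j f \in stage m.+1) &&
  (inord (shuffle_step m j f (inord (m %/ n.+1)) (inord (m %% n.+1)))
     == j :> 'I_(m %% n.+1).+1)
  = (f \in stage m).
Proof.
move=> hm; have hk : (m %% n.+1 < n.+1)%N by rewrite ltn_mod.
have hj : (j <= m %% n.+1)%N by rewrite -ltnS.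
have hst := stage_boundS _ hm.
apply/andP/stageP.
  case=> /stageP A B i; move: (A i) (hst i); rewrite ffunE.
  case: eqP => [-> C [D1 D2]|_ C D]; last by rewrite D.
  rewrite D1 -(perm_below_tperm _ hk hj); apply/andP; split; first by move: C; rewrite D2.
  move: B; rewrite ffunE eqxx inord_eq_inordE //.
  by apply: perm_belowS_le => //; move: C; rewrite D2.
move=> A; split.
  apply/stageP => i; move: (A i) (hst i); rewrite ffunE.
  case: eqP => [-> C [D1 D2]|_ C D]; last by rewrite -D.
  by rewrite D2; move: C; rewrite D1 -(perm_below_tperm _ hk hj) => /andP[].
have := A (inord (m %/ n.+1)); have := hst (inord (m %/ n.+1)); rewrite eqxx => -[D1 _].
rewrite D1 -(perm_below_tperm _ hk hj) => /andP[_ /eqP C].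
rewrite ffunE eqxx C; apply/eqP/val_inj; rewrite /= !inordK //.
all: exact: leq_ltn_trans hj hk.
Qed.

Lemma sum_stageS (V : nmodType) (G : hom -> V) m : (m < r.+1 * n.+1)%N ->
  (\sum_(f in stage m.+1) G f =
   \sum_(j < (m %% n.+1).+1) \sum_(f in stage m) G (shuffle_step m j f))%R.
Proof.
move=> hm.
rewrite (partition_big (fun f : hom => (inord (f (inord (m %/ n.+1)) (inord (m %% n.+1)))
  : 'I_(m %% n.+1).+1)) xpredT) //.
apply: eq_bigr => j _.
rewrite (reindex_onto (shuffle_step m j) (shuffle_step m j)); last by move=> f _; apply: shuffle_stepK.
by apply: eq_bigl => f; rewrite shuffle_stepK eqxx andbT shuffle_step_stage.
Qed.

Lemma hom1_stage m : hom1 \in stage m.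
Proof. by apply/stageP => i; apply/perm_belowP => x _; rewrite ffunE perm1. Qed.

Lemma stage0 : stage 0 = [set hom1].
Proof.
apply/setP => f; rewrite finset.in_set1; apply/idP/eqP => [/stageP A|->]; last exact: hom1_stage.
apply/ffunP => i; rewrite ffunE; apply/permP => x; rewrite perm1.
by move: (A i) => /perm_belowP ->.
Qed.

Lemma stage_full : stage (r.+1 * n.+1) = [set: hom]%SET.
Proof.
apply/setP => f; rewrite finset.in_setT; apply/stageP => i; apply/perm_belowP => x.
suff -> : stage_bound i (r.+1 * n.+1) = n.+1 by rewrite leqNgt ltn_ord.
rewrite /stage_bound; apply/minn_idPl.
have : (i.+1 * n.+1 <= r.+1 * n.+1)%N by rewrite leq_mul2r ltn_ord orbT.
rewrite mulSn; lia.
Qed.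

Definition hamming (f g : hom) :=
  #|[set p : 'I_n.+1 * 'I_r.+1 | f p.2 p.1 != g p.2 p.1]|.

Lemma hamming_shuffle_step m j f g :
  hamming (shuffle_step m j f) (shuffle_step m j g) = hamming f g.
Proof.
apply: eq_card => p; rewrite !inE !ffunE.
by case: ifP => // _; rewrite !permM (inj_eq perm_inj).
Qed.

(* Two shuffle steps differ at most at the preimages of k, j and j'. *)
Lemma hamming_shuffle_step_le m j j' f :
  (hamming (shuffle_step m j f) (shuffle_step m j' f) <= 3)%N.
Proof.
pose i0 : 'I_r.+1 := inord (m %/ n.+1); pose k : 'I_n.+1 := inord (m %% n.+1).
pose s := f i0.
apply: leq_trans (_ : #|[:: ((s^-1)%g k, i0); ((s^-1)%g (inord j), i0);
  ((s^-1)%g (inord j'), i0)]| <= 3)%N; last exact: card_size.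
apply: subset_leq_card; apply/fintype.subsetP => -[v i]; rewrite inE /= !ffunE.
case: ifP => [/eqP ->|_]; last by rewrite eqxx.
rewrite !permM => H; rewrite !inE !xpair_eqE !eqxx !andbT.
case: (eqVneq (s v) k) => [E|n1]; first by rewrite -E permK eqxx.
case: (eqVneq (s v) (inord j)) => [E|n2]; first by rewrite -E permK eqxx orbT.
case: (eqVneq (s v) (inord j')) => [E|n3]; first by rewrite -E permK eqxx !orbT.
by move: H; rewrite !tpermD ?eqxx // eq_sym.
Qed.

Lemma cut_size_hamming f g A : (cut_size f A <= cut_size g A + hamming f g)%N.
Proof.
rewrite /cut_size /hamming.
set S1 := [set p | _]; set S2 := [set p | _]; set D := [set p | _].
apply: leq_trans (subset_leq_card (_ : S1 \subset S2 :|: D)) _.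
  apply/fintype.subsetP => p; rewrite !inE => H.
  by case: (eqVneq (f p.2 p.1) (g p.2 p.1)) => [E|]; [rewrite -E H | rewrite orbT].
by rewrite cardsU leq_subr.
Qed.

Lemma mcut_hamming f g : (mcut f <= mcut g + hamming f g)%N.
Proof.
apply: (big_ind2 (fun a b => a <= b + hamming f g)%N).
- exact: leq_addr.
- by move=> x1 x2 y1 y2 h1 h2; rewrite /minn; case: ifP; case: ifP; lia.
- by move=> A _; exact: cut_size_hamming.
Qed.

End FisherYates.

Local Open Scope classical_set_scope.
Local Open Scope ring_scope.

Lemma expR_le_quad (R : realType) (y : R) : y <= 1/2 -> expR y <= 1 + y + 2 * y ^+ 2.
Proof.
move=> hy.
have h1 : 1 - y <= expR (- y) by have := expR_ge1Dx (- y); lra.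
have h2 : expR y * expR (- y) = 1 by rewrite -expRD subrr expR0.
have h3 : 0 < expR y := expR_gt0 y.
have h4 : expR y * (1 - y) <= 1 by rewrite -[X in _ <= X]h2 ler_pM2l.
nra.
Qed.

Definition ord_avg (R : numFieldType) k (x : 'I_k.+1 -> R) : R :=
  (k.+1%:R)^-1 * \sum_i x i.

Section OrdAvg.
Variables (R : numFieldType) (k : nat).
Implicit Types x y : 'I_k.+1 -> R.

Lemma ord_avg_cst (c : R) : ord_avg (fun _ : 'I_k.+1 => c) = c.
Proof.
by rewrite /ord_avg sumr_const card_ord -[c *+ _]mulr_natl mulKf ?pnatr_eq0.
Qed.

Lemma ord_avgD x y : ord_avg (fun i => x i + y i) = ord_avg x + ord_avg y.
Proof. by rewrite /ord_avg big_split mulrDr. Qed.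

Lemma ord_avgN x : ord_avg (fun i => - x i) = - ord_avg x.
Proof. by rewrite /ord_avg sumrN mulrN. Qed.

Lemma ord_avgZ (c : R) x : ord_avg (fun i => c * x i) = c * ord_avg x.
Proof. by rewrite /ord_avg -mulr_sumr mulrCA. Qed.

Lemma ord_avg_le x y : (forall i, x i <= y i) -> ord_avg x <= ord_avg y.
Proof.
by move=> h; rewrite ler_wpM2l ?invr_ge0 ?ler0n //; apply: ler_sum => i _.
Qed.

Lemma ord_avg_centered x : ord_avg (fun i => x i - ord_avg x) = 0.
Proof. by rewrite ord_avgD ord_avg_cst subrr. Qed.

End OrdAvg.

Lemma hoeffding_ord_avg (R : realType) k (x : 'I_k.+1 -> R) (lam d : R) :
  (forall a b, x a - x b <= d) -> `|lam| * d <= 1/2 ->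
  ord_avg (fun j => expR (lam * (x j - ord_avg x))) <= expR (2 * (lam * d) ^+ 2).
Proof.
move=> hx hl; set mu := ord_avg x.
have d_ge0 : 0 <= d by have := hx ord0 ord0; rewrite subrr.
have dev j : `|x j - mu| <= d.
  have -> : x j - mu = ord_avg (fun i => x j - x i).
    by rewrite ord_avgD ord_avgN ord_avg_cst.
  rewrite ler_norml; apply/andP; split.
    by rewrite -[- d](ord_avg_cst k); apply: ord_avg_le => i; rewrite lerNl opprB.
  by rewrite -[d in _ <= d](ord_avg_cst k); apply: ord_avg_le.
have hy j : expR (lam * (x j - mu)) <= 1 + lam * (x j - mu) + 2 * (lam * d) ^+ 2.
  have hb : `|lam * (x j - mu)| <= `|lam| * d by rewrite normrM ler_wpM2l.
  apply: le_trans (expR_le_quad _) _; first by apply: le_trans (ler_norm _) (le_trans hb hl).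
  rewrite lerD2l ler_pM2l // -real_normK ?num_real // -[X in _ <= X]real_normK ?num_real //.
  by rewrite ler_sqr ?nnegrE ?normr_ge0 // [`|lam * d|]normrM (ger0_norm d_ge0).
apply: le_trans (ord_avg_le hy) _.
rewrite !ord_avgD ord_avgZ ord_avg_centered !ord_avg_cst mulr0 addr0.
exact: expR_ge1Dx.
Qed.

Section Concentration.
Variables (R : realType) (r n : nat).
Local Notation hom := (hom_Fr r.+1 n.+1).
Local Notation M := (r.+1 * n.+1)%N.

Definition stage_avg m (G : hom -> R) : R :=
  (\sum_(f in stage r n m) G f) / #|stage r n m|%:R.

Definition mean (G : hom -> R) : R := (\sum_f G f) / #|{: hom}|%:R.

Definition hamming_lipschitz (G : hom -> R) :=
  forall f g, G f - G g <= (hamming f g)%:R.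

Lemma card_stage_gt0 m : (0 < #|stage r n m|)%N.
Proof. by apply/card_gt0P; exists (hom1 r n); exact: hom1_stage. Qed.

Lemma stage_avg_le m G H : (forall f, G f <= H f) -> stage_avg m G <= stage_avg m H.
Proof.
move=> h; rewrite ler_pM2r ?invr_gt0 ?ltr0n ?card_stage_gt0 //.
by apply: ler_sum => f _.
Qed.

Lemma stage_avg_cst m c : stage_avg m (fun _ => c) = c.
Proof.
by rewrite /stage_avg sumr_const -[c *+ _]mulr_natr mulfK // pnatr_eq0 -lt0n card_stage_gt0.
Qed.

Lemma stage_avgZ m c G : stage_avg m (fun f => c * G f) = c * stage_avg m G.
Proof. by rewrite /stage_avg -mulr_sumr mulrA. Qed.

Lemma stage_avgB m G H :
  stage_avg m (fun f => G f - H f) = stage_avg m G - stage_avg m H.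
Proof. by rewrite /stage_avg sumrB mulrBl. Qed.

Lemma stage_avg0 G : stage_avg 0 G = G (hom1 r n).
Proof. by rewrite /stage_avg stage0 big_set1 cards1 divr1. Qed.

Lemma stage_avgS m G : (m < M)%N ->
  stage_avg m.+1 G = ord_avg (fun j : 'I_(m %% n.+1).+1 => stage_avg m (fun f => G (shuffle_step m j f))).
Proof.
move=> hm.
have card_stageS : (#|stage r n m.+1|%:R : R) = (m %% n.+1).+1%:R * #|stage r n m|%:R.
  have := sum_stageS (fun _ : hom => (1 : R)) hm.
  by rewrite !sumr_const card_ord -mulrnA => ->; rewrite natrM mulrC.
rewrite /stage_avg /ord_avg sum_stageS // card_stageS -mulr_suml invfM mulrCA.
by rewrite mulrA.
Qed.

Lemma stage_avg_full G : stage_avg M G = mean G.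
Proof.
rewrite /stage_avg stage_full cardsT; congr (_ / _).
by apply: eq_bigl => f; rewrite finset.in_setT.
Qed.

Lemma prob_mean (E : pred hom) : prob E = mean (fun f => (E f)%:R).
Proof.
rewrite /prob /mean -sum1_card natr_sum big_mkcond /=.
by congr (_ / _); apply: eq_bigr => f _; rewrite unfold_in; case: (E f).
Qed.

Lemma mean_ge_indicator G (B : pred hom) (a : R) :
  (forall f, 0 <= G f) -> (forall f, ~~ B f -> a <= G f) -> a - a * prob B <= mean G.
Proof.
move=> G_ge0 hG; rewrite prob_mean -!stage_avg_full -stage_avgZ.
rewrite -[a in a - _](stage_avg_cst M) -stage_avgB.
by apply: stage_avg_le => f; case Bf: (B f); rewrite ?mulr1 ?subrr ?mulr0 ?subr0 ?hG ?Bf.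
Qed.

(* Azuma-Hoeffding along the Fisher-Yates filtration: each step moves the
   conditional mean of a Lipschitz function by at most 3. *)
Lemma stage_avg_expR_le m G lam : (m <= M)%N -> hamming_lipschitz G ->
  `|lam| * 3 <= 1/2 ->
  stage_avg m (fun f => expR (lam * (G f - stage_avg m G)))
    <= expR (18 * lam ^+ 2 * m%:R).
Proof.
elim: m G => [|m IH] G hm LG hl; first by rewrite !stage_avg0 subrr mulr0n !mulr0.
pose g (j : 'I_(m %% n.+1).+1) := stage_avg m (fun f => G (shuffle_step m j f)).
have -> : stage_avg m.+1 G = ord_avg g by rewrite stage_avgS.
rewrite stage_avgS //; set mu := ord_avg g.
have step (j : 'I_(m %% n.+1).+1) : stage_avg m (fun f => expR (lam * (G (shuffle_step m j f) - mu)))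
    <= expR (18 * lam ^+ 2 * m%:R) * expR (lam * (g j - mu)).
  have -> : (fun f => expR (lam * (G (shuffle_step m j f) - mu))) =
     (fun f => expR (lam * (g j - mu)) * expR (lam * (G (shuffle_step m j f) - g j))).
    by apply: funext => f; rewrite -expRD; congr expR; ring.
  rewrite stage_avgZ mulrC ler_pM2r ?expR_gt0 //.
  apply: IH => //; first exact: ltnW.
  by move=> f f'; rewrite -(hamming_shuffle_step m j); apply: LG.
have g_diff a b : g a - g b <= 3.
  rewrite -stage_avgB -[3](stage_avg_cst m); apply: stage_avg_le => f.
  by apply: le_trans (LG _ _) _; rewrite ler_nat hamming_shuffle_step_le.
apply: le_trans (ord_avg_le step) _; rewrite ord_avgZ.
apply: le_trans (ler_wpM2l (expR_ge0 _) (hoeffding_ord_avg g_diff hl)) _.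
by rewrite -expRD ler_expR -natr1; lra.
Qed.

Lemma mcdiarmid_lower_tail G (E : pred hom) s : hamming_lipschitz G ->
  0 <= s <= 6 * M%:R -> (forall f, E f -> G f <= mean G - s) ->
  prob E <= expR (- (s ^+ 2 / (72 * M%:R))).
Proof.
move=> LG /andP[s_ge0 s_le]; rewrite prob_mean -!stage_avg_full => hE.
have M_gt0 : (0 : R) < M%:R by rewrite ltr0n muln_gt0.
pose lam := s / (36 * M%:R).
have lam_ge0 : 0 <= lam by rewrite divr_ge0 // mulr_ge0.
have hl : `|- lam| * 3 <= 1/2.
  by rewrite normrN ger0_norm // mulrAC ler_pdivrMr ?mulr_gt0 //; lra.
set mu := stage_avg M G in hE *.
apply: le_trans (_ : stage_avg M (fun f => expR (- (lam * s)) *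
   expR (- lam * (G f - mu))) <= _).
  apply: stage_avg_le => f; case Ef: (E f) => /=; last by rewrite mulr_ge0 ?expR_ge0.
  rewrite -expRD; apply: le_trans (expR_ge1Dx _); have := hE f Ef; nra.
rewrite stage_avgZ; apply: le_trans (ler_wpM2l (expR_ge0 _) (stage_avg_expR_le _ LG hl)) _ => //.
rewrite -expRD sqrrN ler_expR /lam le_eqVlt; apply/orP; left; apply/eqP; field.
by rewrite !(addrC 1) !natr1 !pnatr_eq0.
Qed.

End Concentration.

Lemma hamming_lipschitz_mcut (R : realType) r n :
  hamming_lipschitz (fun f : hom_Fr r.+1 n.+1 => (mcut f)%:R : R).
Proof. by move=> f g; rewrite lerBlDr -natrD ler_nat addnC mcut_hamming. Qed.

Lemma mcut_ratioK (R : realType) r n (f : hom_Fr r.+1 n.+1) :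
  (mcut_ratio f : R) * (r.+1 * n.+1)%:R = (mcut f)%:R.
Proof. by rewrite divfK // pnatr_eq0 muln_eq0. Qed.

Lemma mcut_mean_ge (R : realType) r n (x gam : R) :
  (x - gam) * prob (fun f : hom_Fr r.+1 n.+1 => gam < `|mcut_ratio f - x|) <= gam ->
  (x - 2 * gam) * (r.+1 * n.+1)%:R <= mean (fun f : hom_Fr r.+1 n.+1 => (mcut f)%:R).
Proof.
move=> hp.
have M_gt0 : (0 : R) < (r.+1 * n.+1)%:R by rewrite ltr0n muln_gt0.
apply: le_trans (mean_ge_indicator (a := (x - gam) * (r.+1 * n.+1)%:R)
  (B := fun f => gam < `|mcut_ratio f - x|) _ _); last 2 first.
- by move=> f; rewrite ler0n.
- move=> f; rewrite -leNgt ler_norml -mcut_ratioK => /andP[h _].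
  by rewrite ler_pM2r //; lra.
have := ler_wpM2r (ltW M_gt0) hp; nra.
Qed.

Lemma prob_mcut_ratio_lt_le (R : realType) r n (t gam : R) : 0 < gam <= 1 ->
  (t + gam) * (r.+1 * n.+1)%:R <= mean (fun f : hom_Fr r.+1 n.+1 => (mcut f)%:R) ->
  prob (fun f : hom_Fr r.+1 n.+1 => mcut_ratio f < t)
    <= expR (- (gam ^+ 2 / 72 * r.+1%:R * n.+1%:R)).
Proof.
move=> /andP[gam_gt0 gam_le1] hmean.
have M_gt0 : (0 : R) < (r.+1 * n.+1)%:R by rewrite ltr0n muln_gt0.
apply: le_trans (mcdiarmid_lower_tail (@hamming_lipschitz_mcut R r n)
  (E := fun f => mcut_ratio f < t) (s := gam * (r.+1 * n.+1)%:R) _ _) _.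
- by apply/andP; split; [rewrite mulr_ge0 ?ltW | rewrite ler_pM2r //; lra].
- move=> f /ltW ht; rewrite -mcut_ratioK.
  by apply: le_trans (ler_wpM2r (ltW M_gt0) ht) _; lra.
rewrite ler_expR le_eqVlt; apply/orP; left; apply/eqP; rewrite natrM.
by field; rewrite !(addrC 1) !natr1 !pnatr_eq0.
Qed.

Lemma prob_ge0 (R : realType) r n (E : pred (hom_Fr r n)) : 0 <= prob E :> R.
Proof. by rewrite divr_ge0 ?ler0n. Qed.

Lemma log_rate_le (R : realType) n (p c : R) : (0 < n)%N -> 0 <= p ->
  p <= expR (- (c * n%:R)) -> (log_rate n p <= (- c)%:E)%E.
Proof.
move=> n_gt0 p_ge0 hp; rewrite /log_rate; case: eqP => [_|p_neq0]; first by rewrite leNye.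
have p_gt0 : 0 < p by rewrite lt_neqAle eq_sym p_ge0 andbT; apply/eqP.
rewrite lee_fin ler_pdivrMr ?ltr0n // mulNr -[X in _ <= X]expRK ler_ln ?posrE ?expR_gt0 //.
Qed.

Lemma limn_einf_le (R : realType) (u : (\bar R)^nat) (x : \bar R) :
  (\forall n \near \oo, (u n <= x)%E) -> (limn_einf u <= x)%E.
Proof.
move=> [N _ HN]; apply: le_trans (limn_einf_sup u) _.
rewrite limn_esup_lim; apply: lime_le; first exact: is_cvg_esups.
exists N => // m /= Nm; apply/ereal_supP => _ [k /= mk <-].
by apply: HN; rewrite /= (leq_trans Nm mk).
Qed.

Theorem mainTheorem17 (R : realType) (r : nat) (eps_c : R) :
  (0 < r)%N ->
  (* eps_c is the limit in probability of mcut(sigma_n)/(rn) *)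
  (forall eta : R, 0 < eta ->
     (fun n : nat => prob (fun s : hom_Fr r n => eta < `|(mcut_ratio s : R) - eps_c|))
       @ \oo --> (0 : R)) ->
  forall eps : R, eps < eps_c ->
  exists delta0 : R, 0 < delta0 /\
    forall delta : R, 0 < delta -> delta < delta0 ->
      Order.lt (limn_einf (fun n : nat =>
         log_rate n (prob (fun s : hom_Fr r n => (mcut_ratio s : R) < eps + delta))))
        (0%E : \bar R).
Proof.
case: r => [//|r] _ Hc eps heps.
pose gam : R := Num.min ((eps_c - eps) / 6) 1.
have gam_le : gam <= (eps_c - eps) / 6 by rewrite ge_min lexx.
have gam_le1 : gam <= 1 by rewrite ge_min lexx orbT.
have gam_gt0 : 0 < gam by rewrite lt_min ltr01 andbT; lra.
exists ((eps_c - eps) / 2); split => [|delta delta_gt0 delta_lt]; first lra.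
pose c : R := gam ^+ 2 / 72 * r.+1%:R.
have c_gt0 : 0 < c by rewrite mulr_gt0 ?ltr0n // divr_gt0 // exprn_gt0.
apply: (@le_lt_trans _ _ (- c)%:E); last by rewrite lte_fin oppr_lt0.
apply: limn_einf_le.
have e_gt0 : 0 < gam / (`|eps_c - gam| + 1) by rewrite divr_gt0 // ltr_wpDl.
have /cvgr0_norm_lt /(_ _ e_gt0) [N0 _ small_bad] := Hc gam gam_gt0.
exists N0.+1 => // -[//|N] /ltnW /small_bad /= hp.
apply: log_rate_le => //; first exact: prob_ge0.
apply: prob_mcut_ratio_lt_le; first by rewrite gam_gt0.
apply: le_trans (mcut_mean_ge (x := eps_c) (gam := gam) _).
  by rewrite ler_pM2r ?ltr0n ?muln_gt0 //; lra.
set p := prob _ in hp *.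
have p_ge0 : 0 <= p by exact: prob_ge0.
rewrite ger0_norm // ltr_pdivlMr // in hp.
by apply: le_trans (ler_wpM2r p_ge0 (ler_norm _)) _; lra.
Qed.
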